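(* For every integer $n\ge 1$, the element $$g_n=s^nas^{-n}\,t^nat^{-2n}at^n\in G$$ satisfies $d_{\mathcal A}(1,g_n)\ge 6n$. Equivalently, if $g\in G$ has normal form $g=c_{(-n,0)}c_{(0,n)}c_{(0,-n)}$ (i.e. lamplighter position $(0,0)$ and lit lamps exactly $\{(0,n),(0,-n),(-n,0)\}$), then $d_{\mathcal A}(1,g)\ge 6n$.
   Context: $G=\langle a,s,t \mid a^2=1,\ [a,a^t]=1,\ [s,t]=1,\ a^s=aa^t\rangle$, where $[x,y]=x^{-1}y^{-1}xy$ and $x^y=y^{-1}xy$. $\mathcal A=\{a,s,t,at,ta,ata,as,sa,asa\}$ and $d_{\mathcal A}$ is the word metric on $G$ with respect to $\mathcal A$. For $j\in\mathbb Z$ let $c_{(0,j)}=t^{-j}at^{j}$ and for $i<0$ let $c_{(i,0)}=s^{-i}as^{i}$; one has $g_n=c_{(-n,0)}c_{(0,-n)}c_{(0,n)}$, and these three elements commute. *)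

From Stdlib Require Import List Arith.
Import ListNotations.

Inductive gen : Type := ga | gs | gt.

(* a letter (x, false) is x, (x, true) is x^{-1} *)
Definition word := list (gen * bool).

Definition winv (w : word) : word :=
  rev (map (fun p => (fst p, negb (snd p))) w).

Definition wa : word := [(ga, false)].
Definition wai : word := [(ga, true)].
Definition ws : word := [(gs, false)].
Definition wsi : word := [(gs, true)].
Definition wt : word := [(gt, false)].
Definition wti : word := [(gt, true)].

Definition comm (x y : word) : word := winv x ++ winv y ++ x ++ y.
Definition conj (x y : word) : word := winv y ++ x ++ y.

Definition relators : list word :=
  [ wa ++ wa ;
    comm wa (conj wa wt) ;
    comm ws wt ;
    conj wa ws ++ winv (wa ++ conj wa wt) ].

Inductive weq : word -> word -> Prop :=
| weq_refl : forall u, weq u u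
| weq_sym : forall u v, weq u v -> weq v u
| weq_trans : forall u v w, weq u v -> weq v w -> weq u w
| weq_ctx : forall p q u v, weq u v -> weq (p ++ u ++ q) (p ++ v ++ q)
| weq_free : forall x b, weq [(x, b); (x, negb b)] []
| weq_rel : forall r, In r relators -> weq r [].

Inductive Agen : Type :=
  Aa | As | At | Aat | Ata | Aata | Aas | Asa | Aasa.

Definition Aval (y : Agen) : word :=
  match y with
  | Aa => wa | As => ws | At => wt
  | Aat => wa ++ wt | Ata => wt ++ wa | Aata => wa ++ wt ++ wa
  | Aas => wa ++ ws | Asa => ws ++ wa | Aasa => wa ++ ws ++ wa
  end.

Definition Aword := list (Agen * bool).

Definition Aeval (L : Aword) : word :=
  concat (map (fun p : Agen * bool => if snd p then winv (Aval (fst p)) else Aval (fst p)) L).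

Definition dA_one_ge (g : word) (k : nat) : Prop :=
  forall L : Aword, weq (Aeval L) g -> k <= length L.

Definition pw (w : word) (n : nat) : word := concat (repeat w n).

Definition g_ (n : nat) : word :=
  pw ws n ++ wa ++ pw wsi n ++ pw wt n ++ wa ++ pw wti (2 * n) ++ wa ++ pw wt n.

(* G is a lamplighter group over Z^2: a word moves a lamplighter in Z^2 and toggles lamps, and
   any f : Z^2 -> bool compatible with the relator a^s = a a^t yields an invariant of G, the parity
   of the lit lamps in the support of f.  Pascal's triangle mod 2 provides three such f, supported
   on the half-planes x >= n, y >= n and x + y <= -n, each containing exactly one lamp of g_n.
   Every generator in A moves the lamplighter by at most one unit and toggles lamps only at its two
   endpoints, so a word of length l representing g_n is a closed walk of l unit steps through
   points a, b, c of the three half-planes.  Its horizontal and vertical variations are at least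
   2 (a.x - c.x) and 2 (b.y - c.y), which add up to at least 6n. *)

From Stdlib Require Import List ZArith Lia Bool.
Import ListNotations.
Local Open Scope Z_scope.

Definition padd (p q : Z * Z) : Z * Z := (fst p + fst q, snd p + snd q).

Lemma padd_0l q : padd (0, 0) q = q.
Proof. now destruct q. Qed.

Lemma padd_0r q : padd q (0, 0) = q.
Proof. destruct q; unfold padd; cbn; f_equal; lia. Qed.

Lemma padd_assoc p q r : padd (padd p q) r = padd p (padd q r).
Proof. unfold padd; cbn; f_equal; lia. Qed.

(* Reading words left to right, s and t move by (1,0) and (0,1) and a toggles the lamp at the
   current position; so s^n a s^-n lights (n,0), the lamp the paper calls c_(-n,0). *)
Definition step (l : gen * bool) : Z * Z :=
  match l with
  | (ga, _) => (0, 0)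
  | (gs, false) => (1, 0) | (gs, true) => (-1, 0)
  | (gt, false) => (0, 1) | (gt, true) => (0, -1)
  end.

Fixpoint position (w : word) : Z * Z :=
  match w with
  | [] => (0, 0)
  | l :: w => padd (step l) (position w)
  end.

Fixpoint lamp_parity (f : Z * Z -> bool) (p : Z * Z) (w : word) : bool :=
  match w with
  | [] => false
  | (ga, _) :: w => xorb (f p) (lamp_parity f p w)
  | l :: w => lamp_parity f (padd p (step l)) w
  end.

(* The relator a^s = a a^t identifies the lamp at (i-1, j) with the pair at (i, j-1) and (i, j);
   the other relators impose nothing on lamp parities. *)
Definition admissible (f : Z * Z -> bool) : Prop :=
  forall i j, f (i - 1, j) = xorb (f (i, j - 1)) (f (i, j)).

Lemma position_app u v : position (u ++ v) = padd (position u) (position v).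
Proof.
  induction u as [|l u IH]; cbn; [now rewrite padd_0l | now rewrite IH, padd_assoc].
Qed.

Lemma lamp_parity_app f u v p :
  lamp_parity f p (u ++ v) = xorb (lamp_parity f p u) (lamp_parity f (padd p (position u)) v).
Proof.
  revert p; induction u as [|[[] b] u IH]; intro p; cbn.
  - now rewrite padd_0r.
  - now rewrite IH, padd_0l, xorb_assoc.
  - now rewrite IH, padd_assoc.
  - now rewrite IH, padd_assoc.
Qed.

Lemma lamp_parity_translate f p q w :
  lamp_parity f (padd p q) w = lamp_parity (fun r => f (padd p r)) q w.
Proof.
  revert q; induction w as [|[[] b] w IH]; intro q; cbn; rewrite ?IH; trivial;
    now rewrite <- IH, padd_assoc.
Qed.

Lemma admissible_translate f p : admissible f -> admissible (fun r => f (padd p r)).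
Proof.
  intros Hf i j; unfold padd; cbn.
  replace (fst p + (i - 1)) with (fst p + i - 1) by lia.
  replace (snd p + (j - 1)) with (snd p + j - 1) by lia.
  apply Hf.
Qed.

Lemma position_relator r : In r relators -> position r = (0, 0).
Proof. intros Hr; repeat destruct Hr as [<- | Hr]; easy. Qed.

Lemma lamp_parity_relator_origin f r :
  admissible f -> In r relators -> lamp_parity f (0, 0) r = false.
Proof.
  intros Hf Hr; specialize (Hf 0 0); cbn in Hf.
  repeat destruct Hr as [<- | Hr]; try contradiction; cbn; unfold padd; cbn; rewrite ?Hf;
    now destruct (f (0, 0)), (f (0, -1)).
Qed.

Lemma lamp_parity_relator f p r : admissible f -> In r relators -> lamp_parity f p r = false.
Proof.
  intros Hf Hr.
  rewrite <- (padd_0r p), lamp_parity_translate.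
  now apply lamp_parity_relator_origin; [apply admissible_translate|].
Qed.

Lemma weq_invariants u v : weq u v ->
  position u = position v /\
  forall f, admissible f -> forall p, lamp_parity f p u = lamp_parity f p v.
Proof.
  induction 1 as [u|u v _ [Hpos Hlamp]|u v w _ [Hpos1 Hlamp1] _ [Hpos2 Hlamp2]
                 |p q u v _ [Hpos Hlamp]|x b|r Hr].
  - easy.
  - split; [easy|]; intros; symmetry; auto.
  - split; [congruence|]; intros; rewrite Hlamp1, Hlamp2; auto.
  - split; intros; rewrite ?position_app, ?lamp_parity_app, Hpos, ?Hlamp; auto.
  - split; [now destruct x, b|]; intros f _ p; destruct x, b; cbn; now destruct (f p).
  - split; [now apply position_relator|]; intros; now apply lamp_parity_relator.
Qed.

Fixpoint binomial_odd (n k : nat) : bool :=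
  match k, n with
  | O, _ => true
  | S _, O => false
  | S k', S n' => xorb (binomial_odd n' k') (binomial_odd n' k)
  end.

Lemma binomial_odd_gt n k : (n < k)%nat -> binomial_odd n k = false.
Proof.
  revert k; induction n as [|n IH]; intros [|k] Hk; cbn; try lia; trivial.
  rewrite !IH by lia; reflexivity.
Qed.

Lemma binomial_odd_diag n : binomial_odd n n = true.
Proof.
  induction n as [|n IH]; cbn; trivial.
  now rewrite IH, binomial_odd_gt by lia.
Qed.

(* The parity of C(m+k, k), extended to m < 0 by C(m+k, k) = (-1)^k C(-m-1, k) and by zero to
   k < 0, so that Pascal's rule holds on all of Z^2. *)
Definition pascal (k m : Z) : bool :=
  (0 <=? k) &&
  binomial_odd (if 0 <=? m then Z.to_nat (m + k) else Z.to_nat (- m - 1)) (Z.to_nat k).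

Lemma pascal_neg k m : k < 0 -> pascal k m = false.
Proof. intros Hk; unfold pascal; now destruct (Z.leb_spec 0 k); [lia|]. Qed.

Lemma pascal_0 m : pascal 0 m = true.
Proof. unfold pascal; cbn; now destruct (0 <=? m), (Z.to_nat _). Qed.

Lemma pascal_succ k m : pascal (k + 1) m = xorb (pascal (k + 1) (m - 1)) (pascal k m).
Proof.
  destruct (Z.ltb_spec k 0) as [Hk|Hk].
  - rewrite (pascal_neg k) by lia.
    destruct (Z.eq_dec k (-1)) as [->|]; [now rewrite !pascal_0|].
    now rewrite !pascal_neg by lia.
  - unfold pascal.
    destruct (Z.leb_spec 0 (k + 1)), (Z.leb_spec 0 k); try lia; cbn [andb].
    replace (Z.to_nat (k + 1)) with (S (Z.to_nat k)) by lia.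
    destruct (Z.leb_spec 0 m), (Z.leb_spec 0 (m - 1)); try lia.
    + replace (Z.to_nat (m + (k + 1))) with (S (Z.to_nat (m + k))) by lia.
      replace (m - 1 + (k + 1)) with (m + k) by lia.
      cbn [binomial_odd]; apply xorb_comm.
    + replace m with 0 in * by lia; cbn.
      replace (Z.to_nat (k + 1)) with (S (Z.to_nat k)) by lia.
      now rewrite !binomial_odd_diag.
    + replace (Z.to_nat (- (m - 1) - 1)) with (S (Z.to_nat (- m - 1))) by lia.
      cbn [binomial_odd].
      now destruct (binomial_odd (Z.to_nat (- m - 1)) (Z.to_nat k)),
                   (binomial_odd (Z.to_nat (- m - 1)) (S (Z.to_nat k))).
Qed.

Lemma pascal_pred k m : pascal (k + 1) (m - 1) = xorb (pascal (k + 1) m) (pascal k m).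
Proof. rewrite (pascal_succ k m); now destruct (pascal (k + 1) (m - 1)), (pascal k m). Qed.

Lemma pascal_xor k m : pascal k m = xorb (pascal (k + 1) (m - 1)) (pascal (k + 1) m).
Proof. rewrite (pascal_succ k m); now destruct (pascal (k + 1) (m - 1)), (pascal k m). Qed.

Definition east (n : Z) (p : Z * Z) : bool := pascal (fst p - n) (snd p).
Definition north (n : Z) (p : Z * Z) : bool := pascal (snd p - n) (fst p).
Definition southwest (n : Z) (p : Z * Z) : bool := pascal (- n - (fst p + snd p)) (fst p).

Lemma east_admissible n : admissible (east n).
Proof.
  intros i j; unfold east; cbn.
  replace (i - n) with (i - 1 - n + 1) by lia.
  apply pascal_xor.
Qed.

Lemma north_admissible n : admissible (north n).
Proof.
  intros i j; unfold north; cbn.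
  replace (j - n) with (j - 1 - n + 1) by lia.
  rewrite xorb_comm; apply pascal_pred.
Qed.

Lemma southwest_admissible n : admissible (southwest n).
Proof.
  intros i j; unfold southwest; cbn.
  replace (- n - (i - 1 + j)) with (- n - (i + j) + 1) by lia.
  replace (- n - (i + (j - 1))) with (- n - (i + j) + 1) by lia.
  apply pascal_pred.
Qed.

Lemma east_support n p : east n p = true -> n <= fst p.
Proof.
  unfold east; intros H; destruct (Z.leb_spec n (fst p)); [lia|].
  now rewrite pascal_neg in H by lia.
Qed.

Lemma north_support n p : north n p = true -> n <= snd p.
Proof.
  unfold north; intros H; destruct (Z.leb_spec n (snd p)); [lia|].
  now rewrite pascal_neg in H by lia.
Qed.

Lemma southwest_support n p : southwest n p = true -> fst p + snd p <= - n.
Proof.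
  unfold southwest; intros H; destruct (Z.leb_spec (fst p + snd p) (- n)); [lia|].
  now rewrite pascal_neg in H by lia.
Qed.

Lemma position_pw l k :
  position (pw [l] k) = (Z.of_nat k * fst (step l), Z.of_nat k * snd (step l)).
Proof.
  induction k as [|k IH]; [reflexivity|].
  change (pw [l] (S k)) with (l :: pw [l] k).
  cbn [position]; rewrite IH; unfold padd; cbn [fst snd]; f_equal; lia.
Qed.

Lemma lamp_parity_pw f l k p : fst l <> ga -> lamp_parity f p (pw [l] k) = false.
Proof.
  intros Hl; revert p; induction k as [|k IH]; intro p; [reflexivity|].
  change (pw [l] (S k)) with (l :: pw [l] k).
  destruct l as [[] b]; cbn in *; [congruence | apply IH..].
Qed.

Lemma position_g k : position (g_ k) = (0, 0).
Proof.
  unfold g_, ws, wsi, wt, wti, wa.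
  rewrite !position_app, !position_pw; unfold padd; cbn; f_equal; lia.
Qed.

Lemma lamp_parity_g f k : lamp_parity f (0, 0) (g_ k) =
  xorb (f (Z.of_nat k, 0)) (xorb (f (0, Z.of_nat k)) (f (0, - Z.of_nat k))).
Proof.
  unfold g_, ws, wsi, wt, wti, wa.
  rewrite !lamp_parity_app, ?position_app, !position_pw, !lamp_parity_pw by (cbn; congruence).
  unfold padd; cbn; rewrite !xorb_false_r.
  repeat f_equal; lia.
Qed.

Lemma east_g k : (1 <= k)%nat -> lamp_parity (east (Z.of_nat k)) (0, 0) (g_ k) = true.
Proof.
  intros Hk; rewrite lamp_parity_g; unfold east; cbn.
  rewrite Z.sub_diag, pascal_0, !pascal_neg by lia.
  reflexivity.
Qed.

Lemma north_g k : (1 <= k)%nat -> lamp_parity (north (Z.of_nat k)) (0, 0) (g_ k) = true.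
Proof.
  intros Hk; rewrite lamp_parity_g; unfold north; cbn.
  rewrite Z.sub_diag, pascal_0, !pascal_neg by lia.
  reflexivity.
Qed.

Lemma southwest_g k : (1 <= k)%nat -> lamp_parity (southwest (Z.of_nat k)) (0, 0) (g_ k) = true.
Proof.
  intros Hk; rewrite lamp_parity_g; unfold southwest; cbn.
  replace (- Z.of_nat k - - Z.of_nat k) with 0 by lia.
  rewrite pascal_0, !pascal_neg by lia.
  reflexivity.
Qed.

Definition piece (y : Agen * bool) : word :=
  if snd y then winv (Aval (fst y)) else Aval (fst y).

Definition endpoint (L : Aword) : Z * Z := position (Aeval L).

Lemma endpoint_cons y L : endpoint (y :: L) = padd (position (piece y)) (endpoint L).
Proof. apply position_app. Qed.

Lemma endpoint_app L1 L2 : endpoint (L1 ++ L2) = padd (endpoint L1) (endpoint L2).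
Proof. unfold endpoint, Aeval; now rewrite map_app, concat_app, position_app. Qed.

Lemma piece_unit_step y :
  Z.abs (fst (position (piece y))) + Z.abs (snd (position (piece y))) <= 1.
Proof. destruct y as [[] []]; cbn; lia. Qed.

Lemma piece_lamps f p y : lamp_parity f p (piece y) = true ->
  f p = true \/ f (padd p (position (piece y))) = true.
Proof.
  destruct y as [[] []], p as [i j]; cbn; unfold padd; cbn [fst snd]; rewrite ?Z.add_0_r;
    intro H;
    repeat match type of H with context [f ?q] => destruct (f q) eqn:?; cbn in H end;
    try discriminate; auto.
Qed.

Lemma lit_lamp_visited f p L : lamp_parity f p (Aeval L) = true ->
  exists L1 L2, L = L1 ++ L2 /\ f (padd p (endpoint L1)) = true.
Proof.
  revert p; induction L as [|y L IH]; intros p H; [discriminate|].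
  change (Aeval (y :: L)) with (piece y ++ Aeval L) in H.
  rewrite lamp_parity_app in H.
  destruct (lamp_parity f p (piece y)) eqn:Hy.
  - destruct (piece_lamps _ _ _ Hy) as [Hf|Hf].
    + exists [], (y :: L); now rewrite padd_0r.
    + exists [y], L; unfold endpoint; cbn; now rewrite app_nil_r.
  - destruct (IH _ H) as (L1 & L2 & -> & Hf).
    exists (y :: L1), L2; split; [reflexivity|].
    now rewrite endpoint_cons, <- padd_assoc.
Qed.

Section Variation.

Variable proj : Z * Z -> Z.
Hypothesis proj_padd : forall p q, proj (padd p q) = proj p + proj q.

Fixpoint variation (L : Aword) : Z :=
  match L with
  | [] => 0
  | y :: L => Z.abs (proj (position (piece y))) + variation L
  end.

Lemma variation_app L1 L2 : variation (L1 ++ L2) = variation L1 + variation L2.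
Proof. induction L1 as [|y L1 IH]; cbn; lia. Qed.

Lemma abs_proj_endpoint_le L : Z.abs (proj (endpoint L)) <= variation L.
Proof.
  induction L as [|y L IH]; cbn [variation].
  - pose proof (proj_padd (0, 0) (0, 0)) as H0; rewrite padd_0l in H0.
    unfold endpoint; cbn; lia.
  - rewrite endpoint_cons, proj_padd; lia.
Qed.

Lemma closed_walk_variation L A1 A2 C1 C2 :
  proj (endpoint L) = 0 -> L = A1 ++ A2 -> L = C1 ++ C2 ->
  2 * (proj (endpoint A1) - proj (endpoint C1)) <= variation L.
Proof.
  intros Hclosed -> HC.
  destruct (app_eq_app _ _ _ _ HC) as (M & [[-> ->] | [-> ->]]).
  - rewrite <- app_assoc in *.
    rewrite !endpoint_app, !proj_padd in *; rewrite !variation_app.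
    pose proof (abs_proj_endpoint_le C1); pose proof (abs_proj_endpoint_le M);
      pose proof (abs_proj_endpoint_le A2); lia.
  - rewrite <- app_assoc in *.
    rewrite !endpoint_app, !proj_padd in *; rewrite !variation_app.
    pose proof (abs_proj_endpoint_le A1); pose proof (abs_proj_endpoint_le M);
      pose proof (abs_proj_endpoint_le C2); lia.
Qed.

End Variation.

Lemma variation_length L : variation fst L + variation snd L <= Z.of_nat (length L).
Proof.
  induction L as [|y L IH]; cbn [variation length]; [easy|].
  pose proof (piece_unit_step y); lia.
Qed.

Lemma visits_support f L g : weq (Aeval L) g -> admissible f ->
  lamp_parity f (0, 0) g = true -> exists L1 L2, L = L1 ++ L2 /\ f (endpoint L1) = true.
Proof.
  intros HL Hf Hg.
  rewrite <- (proj2 (weq_invariants _ _ HL) f Hf) in Hg.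
  destruct (lit_lamp_visited _ _ _ Hg) as (L1 & L2 & HL12 & H).
  exists L1, L2; now rewrite padd_0l in H.
Qed.

Theorem mainTheorem6 : forall n : nat, (1 <= n)%nat -> dA_one_ge (g_ n) (6 * n).
Proof.
  intros n Hn L HL.
  assert (Hclosed : endpoint L = (0, 0)).
  { unfold endpoint; rewrite (proj1 (weq_invariants _ _ HL)); apply position_g. }
  assert (Hx : fst (endpoint L) = 0) by now rewrite Hclosed.
  assert (Hy : snd (endpoint L) = 0) by now rewrite Hclosed.
  destruct (visits_support _ _ _ HL (east_admissible _) (east_g n Hn))
    as (A1 & A2 & HA & Ha%east_support).
  destruct (visits_support _ _ _ HL (north_admissible _) (north_g n Hn))
    as (B1 & B2 & HB & Hb%north_support).
  destruct (visits_support _ _ _ HL (southwest_admissible _) (southwest_g n Hn))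
    as (C1 & C2 & HC & Hc%southwest_support).
  pose proof (closed_walk_variation fst (fun _ _ => eq_refl) _ _ _ _ _ Hx HA HC).
  pose proof (closed_walk_variation snd (fun _ _ => eq_refl) _ _ _ _ _ Hy HB HC).
  pose proof (variation_length L).
  lia.
Qed.
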